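(* For $m,n\in\mathbb{N}$, let $$G_{m,n}=\sum_{k=0}^{n-1}\frac{1}{(2k+1)(2k+2)\cdots(2k+m)}.$$ Then $$G_{m,n}=\sum_{k=1}^n\frac{(-1)^{k-1}}{(m-1)!\,(m+k-1)}\binom{n}{k}\,{}_2F_1(1,1-k;m+k;-1).$$
   Context: $\mathbb{N}$ is the set of positive integers. For complex $a_1,\ldots,a_{s+1},b_1,\ldots,b_s$ with no $b_i$ zero or a negative integer, the generalized hypergeometric function is ${}_{s+1}F_s(a_1,\ldots,a_{s+1};b_1,\ldots,b_s;x)=\sum_{i\geq 0}\frac{(a_1)_i\cdots(a_{s+1})_i}{(b_1)_i\cdots(b_s)_i}\frac{x^i}{i!}$, where $(a)_0=1$ and $(a)_i=a(a+1)\cdots(a+i-1)$ for $i>0$. (When some $a_j$ is a nonpositive integer the series is a finite sum.) *)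

From mathcomp Require Import all_boot all_order all_algebra.
Set Implicit Arguments. Unset Strict Implicit. Unset Printing Implicit Defensive.
Import Order.TTheory GRing.Theory Num.Theory.
Local Open Scope ring_scope.

Definition poch (R : ringType) (a : R) (i : nat) : R :=
  \prod_(j < i) (a + j%:R).

Definition F21_term (R : fieldType) (a b c x : R) (i : nat) : R :=
  poch a i * poch b i / (poch c i * i`!%:R) * x ^+ i.

(* 2F1(a,b;c;x) in the terminating case where b = -N is a nonpositive
   integer: all terms with index i > N vanish since (-N)_i = 0, so the
   series is the finite sum of its terms of index 0..N. *)
Definition F21_term_neg (R : fieldType) (a : R) (N : nat) (c x : R) : R :=
  \sum_(i < N.+1) F21_term a (- N%:R) c x i.

Definition G (m n : nat) : rat :=
  \sum_(k < n) (poch ((2 * k).+1)%:R m)^-1.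

(* Each term of G_{m,n} is a Beta integral,
     1 / ((2k+1)...(2k+m)) = (1/(m-1)!) int_0^1 x^(2k) (1-x)^(m-1) dx.
   Summing over k and writing x^2 = 1 - (1-x)(1+x), the identity
   sum_{j<n} (1+z)^j = sum_k C(n,k+1) z^k turns the integrand into
   sum_k (-1)^k C(n,k+1) (1-x)^(m-1+k) (1+x)^k.  Repeated integration by parts
   gives int_0^1 (1-x)^M (1+x)^K dx = sum_{i<=K} K^_i M! / (M+i+1)!, which is
   2F1(1,-K;M+2;-1) / (M+1).  Only polynomials are integrated, so int_0^1 is
   the linear form p |-> sum_i p_i / (i+1) on {poly R}. *)

From HB Require Import structures.
From mathcomp Require Import all_boot all_order all_algebra.
From mathcomp Require Import ring.
Set Implicit Arguments.
Unset Strict Implicit.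
Unset Printing Implicit Defensive.

Import Order.TTheory GRing.Theory Num.Theory.
Local Open Scope ring_scope.

Lemma natr_fact_neq0 (R : numDomainType) n : (n`!%:R : R) != 0.
Proof. by rewrite pnatr_eq0 -lt0n fact_gt0. Qed.

Section Pochhammer.
Variable R : nzRingType.

Lemma pochS (a : R) i : poch a i.+1 = poch a i * (a + i%:R).
Proof. by rewrite /poch big_ord_recr. Qed.

Lemma prod_addSn_fact a i : (\prod_(j < i) (a.+1 + j) * a`! = (a + i)`!)%N.
Proof.
elim: i => [|i IH]; first by rewrite big_ord0 mul1n addn0.
by rewrite big_ord_recr /= mulnAC IH addnS factS addSn mulnC.
Qed.

Lemma poch_natS a i : poch (a.+1%:R : R) i * a`!%:R = (a + i)`!%:R.
Proof.
rewrite -prod_addSn_fact natrM natr_prod.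
by congr (_ * _); apply: eq_bigr => j _; rewrite natrD.
Qed.

Lemma poch1 i : poch (1 : R) i = i`!%:R.
Proof. by have := poch_natS 0 i; rewrite fact0 mulr1 add0n. Qed.

Lemma poch_opp_nat K i : poch (- K%:R : R) i = (-1) ^+ i * (K ^_ i)%:R.
Proof.
elim: i => [|i IH]; first by rewrite /poch big_ord0 expr0 mul1r ffactn0.
rewrite pochS IH ffactnSr natrM.
have [le_iK | lt_Ki] := leqP i K; last by rewrite ffact_small // !(mulr0, mul0r).
by rewrite natrB // addrC -opprB mulrN exprSr mulrN1 mulNr !mulrA.
Qed.

End Pochhammer.

Lemma F21_term_neg_ffact (R : numFieldType) K M :
  F21_term_neg (1 : R) K M.+1%:R (-1) =
  \sum_(i < K.+1) (K ^_ i)%:R * M`!%:R / (M + i)`!%:R.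
Proof.
apply: eq_bigr => i _; rewrite /F21_term poch1 poch_opp_nat.
have -> : poch (M.+1%:R : R) i = (M + i)`!%:R / M`!%:R.
  by rewrite -poch_natS mulfK ?natr_fact_neq0.
(* [field] cannot use ((-1) ^+ i) ^+ 2 = 1, so that factor is made explicit. *)
transitivity ((K ^_ i)%:R * M`!%:R / (M + i)`!%:R * ((-1) ^+ i) ^+ 2 : R);
  last by rewrite sqrr_sign mulr1.
by field; rewrite !natr_fact_neq0.
Qed.

Section SumIdentities.
Variable R : comNzRingType.

Lemma sum_exprD1n (x : R) n :
  \sum_(j < n) (x + 1) ^+ j = \sum_(k < n) x ^+ k *+ 'C(n, k.+1).
Proof.
elim: n => [|n IH]; first by rewrite !big_ord0.
rewrite big_ord_recr /= IH exprD1n.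
under [RHS]eq_bigr do rewrite binS mulrnDr.
by rewrite big_split /= [X in _ = X + _]big_ord_recr /= bin_small // mulr0n addr0.
Qed.

Lemma sum_even_powers (x : R) n :
  \sum_(k < n) x ^+ (2 * k) =
  \sum_(k < n) (-1) ^+ k * ((1 - x) ^+ k * (1 + x) ^+ k) *+ 'C(n, k.+1).
Proof.
have sqrE : x ^+ 2 = - ((1 - x) * (1 + x)) + 1 by ring.
under eq_bigr do rewrite exprM sqrE.
by rewrite sum_exprD1n; apply: eq_bigr => k _; rewrite [in LHS]exprNn exprMn.
Qed.

End SumIdentities.

Section PolyIntegral.
Variable R : numFieldType.
Implicit Types p q : {poly R}.

(* Locked: otherwise big-operator rewrites such as [mulr_suml] unify with its body. *)
Fact integral01_key : unit. Proof. by []. Qed.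
Definition integral01 : {poly R} -> R :=
  locked_with integral01_key (fun p => \sum_(i < size p) p`_i / i.+1%:R).

Lemma integral01E p : integral01 p = \sum_(i < size p) p`_i / i.+1%:R.
Proof. by rewrite /integral01 locked_withE. Qed.

Lemma integral01_wide n p :
  (size p <= n)%N -> integral01 p = \sum_(i < n) p`_i / i.+1%:R.
Proof.
move=> le_p_n.
rewrite integral01E (big_ord_widen n (fun i => p`_i / i.+1%:R) le_p_n).
rewrite big_mkcond /=; apply: eq_bigr => i _.
by case: ltnP => // /(nth_default 0) ->; rewrite mul0r.
Qed.

Lemma integral01_0 : integral01 0 = 0.
Proof. by rewrite integral01E size_poly0 big_ord0. Qed.

Lemma integral01D p q : integral01 (p + q) = integral01 p + integral01 q.
Proof.
rewrite (integral01_wide (size_polyD p q)).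
rewrite (integral01_wide (leq_maxl (size p) (size q))).
rewrite (integral01_wide (leq_maxr (size p) (size q))) -big_split /=.
by apply: eq_bigr => i _; rewrite coefD mulrDl.
Qed.

Lemma integral01Z c p : integral01 (c *: p) = c * integral01 p.
Proof.
rewrite (integral01_wide (size_scale_leq c p)) integral01E mulr_sumr.
by apply: eq_bigr => i _; rewrite coefZ mulrA.
Qed.

HB.instance Definition _ :=
  GRing.isNmodMorphism.Build {poly R} R integral01 (integral01_0, integral01D).
HB.instance Definition _ :=
  GRing.isScalable.Build R {poly R} R *%R integral01 integral01Z.

Lemma integral01_deriv p : integral01 p^`() = p.[1] - p.[0].
Proof.
have le_dp_p : (size p^`() <= size p)%N.
  have [->|p_neq0] := eqVneq p 0; first by rewrite deriv0.
  exact/ltnW/lt_size_deriv.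
rewrite (integral01_wide le_dp_p) (horner_coef_wide 1 (leqnSn (size p))).
rewrite big_ord_recl horner_coef0 expr0 mulr1 addrC addKr.
apply: eq_bigr => i _; rewrite coef_deriv expr1n mulr1 lift0.
by rewrite -(mulr_natr p`_i.+1) mulfK ?pnatr_eq0.
Qed.

Lemma integral01_by_parts p q :
  integral01 (p^`() * q) = (p * q).[1] - (p * q).[0] - integral01 (p * q^`()).
Proof. by rewrite -integral01_deriv derivM linearD addrK. Qed.

Lemma integral01_Xn a : integral01 'X^a = a.+1%:R^-1.
Proof.
rewrite integral01E size_polyXn big_ord_recr /= coefXn eqxx mul1r big1 ?add0r //.
by move=> i _; rewrite coefXn (ltn_eqF (ltn_ord i)) mul0r.
Qed.

Lemma integral01_beta_rec a b :
  a.+1%:R * integral01 ('X^a * (1 - 'X) ^+ b.+1) =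
  b.+1%:R * integral01 ('X^(a.+1) * (1 - 'X) ^+ b).
Proof.
have parts := integral01_by_parts 'X^(a.+1) ((1 - 'X) ^+ b.+1).
rewrite derivXn deriv_exp derivB derivC derivX sub0r !hornerE subrr in parts.
rewrite expr1n !expr0n /= mulr0 mul0r subrr sub0r in parts.
rewrite mulN1r mulNrn mulrN mulrnAl mulrnAr raddfN opprK !(raddfMn integral01) in parts.
by rewrite !mulr_natl.
Qed.

Lemma integral01_beta a b :
  integral01 ('X^a * (1 - 'X) ^+ b) = (a`! * b`!)%:R / (a + b).+1`!%:R.
Proof.
have natS_neq0 n : (n.+1%:R : R) != 0 by rewrite pnatr_eq0.
elim: b a => [|b IH] a.
  rewrite mulr1 integral01_Xn addn0 fact0 muln1 factS natrM.
  by field; rewrite nat1r natr_fact_neq0 natS_neq0.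
apply: (mulfI (natS_neq0 a)); rewrite integral01_beta_rec IH addSnnS.
rewrite !mulrA -!natrM; congr (_%:R / _).
by rewrite !factS; ring.
Qed.

Lemma integral01_subX_addX_rec M K :
  M.+1%:R * integral01 ((1 - 'X) ^+ M * (1 + 'X) ^+ K.+1) =
  1 + K.+1%:R * integral01 ((1 - 'X) ^+ M.+1 * (1 + 'X) ^+ K).
Proof.
have parts := integral01_by_parts ((1 - 'X) ^+ M.+1) ((1 + 'X) ^+ K.+1).
rewrite !deriv_exp derivB derivD derivC derivX sub0r add0r !hornerE subrr in parts.
rewrite expr0n /= mul0r subr0 !expr1n mulr1 sub0r in parts.
rewrite mulN1r mulNrn mulNr mulrnAl mulrnAr !raddfN !(raddfMn integral01) in parts.
by apply: oppr_inj; rewrite !mulr_natl parts opprD.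
Qed.

Lemma integral01_subX_addX M K :
  integral01 ((1 - 'X) ^+ M * (1 + 'X) ^+ K) =
  \sum_(i < K.+1) (K ^_ i)%:R * M`!%:R / (M + i).+1`!%:R.
Proof.
have natS_neq0 n : (n.+1%:R : R) != 0 by rewrite pnatr_eq0.
elim: K M => [|K IH] M.
  have := integral01_beta 0 M; rewrite expr0 !mul1r fact0 mul1n mulr1 => ->.
  by rewrite big_ord1 ffactn0 mul1r addn0.
apply: (mulfI (natS_neq0 M)).
rewrite integral01_subX_addX_rec IH [in RHS]big_ord_recl mulrDr !mulr_sumr.
congr (_ + _).
  by rewrite ffactn0 addn0 mul1r mulrA -natrM -factS divff ?natr_fact_neq0.
apply: eq_bigr => i _; rewrite lift0 ffactSS addSnnS (factS M) !natrM.
ring.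
Qed.

Lemma poch_natV_beta a b :
  (poch (a.+1%:R : R) b.+1)^-1 = integral01 ('X^a * (1 - 'X) ^+ b) / b`!%:R.
Proof.
have := poch_natS R a b.+1; rewrite addnS => poch_eq.
have := natr_fact_neq0 R (a + b).+1.
rewrite -poch_eq mulf_eq0 negb_or => /andP[poch_neq0 _].
rewrite integral01_beta -poch_eq natrM.
by field; rewrite poch_neq0 !natr_fact_neq0.
Qed.

Lemma integral01_F21 M K :
  integral01 ((1 - 'X) ^+ M * (1 + 'X) ^+ K) =
  F21_term_neg 1 K M.+2%:R (-1) / M.+1%:R.
Proof.
rewrite integral01_subX_addX F21_term_neg_ffact mulr_suml; apply: eq_bigr => i _.
rewrite addSn (factS M) natrM.
by field; rewrite nat1r pnatr_eq0 natr_fact_neq0.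
Qed.

End PolyIntegral.

Theorem proposition3p5 (m n : nat) (hm : (0 < m)%N) (hn : (0 < n)%N) :
  G m n =
  \sum_(1 <= k < n.+1)
     ((-1) ^+ k.-1 / ((m.-1)`!%:R * (m + k).-1%:R) * 'C(n, k)%:R
       * F21_term_neg (1 : rat) k.-1 (m + k)%:R (-1)).
Proof.
case: m hm => // m _.
have G_integral : G m.+1 n =
    integral01 ((\sum_(k < n) 'X^(2 * k)) * (1 - 'X) ^+ m) / m`!%:R.
  rewrite /G mulr_suml raddf_sum mulr_suml.
  by apply: eq_bigr => k _; rewrite poch_natV_beta.
rewrite G_integral sum_even_powers mulr_suml raddf_sum mulr_suml big_add1 big_mkord.
apply: eq_bigr => k _ /=.
have -> : (-1) ^+ k * ((1 - 'X) ^+ k * (1 + 'X) ^+ k) *+ 'C(n, k.+1) * (1 - 'X) ^+ m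
    = ((-1) ^+ k * 'C(n, k.+1)%:R : rat) *: ((1 - 'X) ^+ (m + k) * (1 + 'X) ^+ k).
  by rewrite -mul_polyC rmorphM rmorph_sign rmorph_nat exprD; ring.
rewrite integral01Z integral01_F21 addSn addnS.
by field; rewrite -natrD nat1r pnatr_eq0 natr_fact_neq0.
Qed.
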